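(* Let $k, n \in \mathbb{N}$ with $k$ odd and $k \le 2n$. Color every edge of the complete bipartite graph $K_{2n,2n}$ red or blue so that every vertex is incident with exactly $n$ red edges and exactly $n$ blue edges. Then $K_{2n,2n}$ has a perfect matching consisting of exactly $k$ red edges and $2n-k$ blue edges if and only if the graph of blue edges is connected.
   Context: The graph of blue edges is the spanning subgraph of $K_{2n,2n}$ on all $4n$ vertices whose edge set is the set of blue edges. *)

From mathcomp Require Import all_boot all_fingroup.
Set Implicit Arguments. Unset Strict Implicit. Unset Printing Implicit Defensive.

(* K_{2n,2n}: left part 'I_(2n), right part 'I_(2n); the edge {i (left), j (right)}
   has colour [red i j] (true = red, false = blue). *)

Definition balanced (n : nat) (red : 'I_(2 * n) -> 'I_(2 * n) -> bool) : Prop :=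
  (forall i : 'I_(2 * n), #|[set j | red i j]| = n /\ #|[set j | ~~ red i j]| = n) /\
  (forall j : 'I_(2 * n), #|[set i | red i j]| = n /\ #|[set i | ~~ red i j]| = n).

(* vertex set of K_{2n,2n}: inl = left vertices, inr = right vertices *)
Definition vtx (n : nat) : finType := ('I_(2 * n) + 'I_(2 * n))%type.

Definition blue_adj (n : nat) (red : 'I_(2 * n) -> 'I_(2 * n) -> bool) : rel (vtx n) :=
  fun x y => match x, y with
             | inl i, inr j => ~~ red i j
             | inr j, inl i => ~~ red i j
             | _, _ => false
             end.

Definition blue_connected (n : nat) (red : 'I_(2 * n) -> 'I_(2 * n) -> bool) : Prop :=
  forall x y : vtx n, connect (blue_adj red) x y.

(* a perfect matching of K_{2n,2n} is given by a bijection s from left to right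
   (edges {i, s i}); it has exactly k red edges (hence 2n-k blue edges) *)
Definition matching_with_k_red (n k : nat) (red : 'I_(2 * n) -> 'I_(2 * n) -> bool)
  (s : 'S_(2 * n)) : Prop :=
  #|[set i | red i (s i)]| = k /\ #|[set i | ~~ red i (s i)]| = 2 * n - k.

From mathcomp Require Import all_boot all_fingroup.
From mathcomp Require Import zify.
Set Implicit Arguments. Unset Strict Implicit. Unset Printing Implicit Defensive.

(* Write nred s for the number of red edges of the perfect matching s.
   If the blue graph is disconnected, the balance condition forces the red
   edges to be exactly the edges between two vertex classes
   (red x y = u x (+) v y, both classes meeting each side in n vertices), and
   then nred s is always even.
   Conversely, swapping two partners lowers nred by 1 or 2 whenever a red edge
   is present (and raises it likewise when a blue one is), so nred takes one
   of the values k - 1, k. If it takes k - 1 <= n - 1 but never k, then no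
   transposition or 3-cycle of partners gains exactly one red edge; these
   local constraints make "blue" an equivalence relation on the blue diagonal
   with at least two classes and eventually force the colouring to be of the
   above form, so the blue graph is disconnected. For k > n, apply this to
   the blue colouring and 2n - k. *)

Definition nred (T : finType) (c : T -> T -> bool) (s : {perm T}) : nat :=
  #|[set x | c x (s x)]|.

(* Blue edges join equally labelled vertices only. *)
Definition cut_coloring (T : finType) (c : T -> T -> bool) : Prop :=
  exists u v : T -> bool, forall x y, c x y = u x (+) v y.

Section RedEdges.
Variables (T : finType) (c : T -> T -> bool).

Lemma card_set_perm (P : pred T) (s : {perm T}) :
  #|[set x | P (s x)]| = #|[set x | P x]|.
Proof.
have -> : [set x | P (s x)] = s @^-1: [set x | P x] by apply/setP => x; rewrite !inE.
exact/card_preimset/perm_inj.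
Qed.

Lemma card_setC_pred (P : pred T) : #|[set x | ~~ P x]| = #|T| - #|[set x | P x]|.
Proof.
have -> : [set x | ~~ P x] = ~: [set x | P x] by apply/setP => x; rewrite !inE.
by rewrite cardsCs setCK.
Qed.

Lemma card_set_sum (P : pred T) : #|[set x | P x]| = \sum_x P x.
Proof. by rewrite -sum1dep_card big_mkcond; apply: eq_bigr => x _; case: ifP. Qed.

Lemma nred_sum s : nred c s = \sum_x c x (s x).
Proof. exact: card_set_sum. Qed.

Lemma nredN s : nred (fun x y => ~~ c x y) s = #|T| - nred c s.
Proof. exact: card_setC_pred. Qed.

Lemma nred_le s : nred c s <= #|T|.
Proof. exact: max_card. Qed.

Lemma nred_perm_on (A : {set T}) (p s : {perm T}) : perm_on A p ->
  nred c (p * s) + \sum_(x in A) c x (s x) = nred c s + \sum_(x in A) c x (s (p x)).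
Proof.
move=> pA; rewrite !nred_sum !(bigID [in A] predT) /=.
have -> : \sum_(x | ~~ (x \in A)) c x ((p * s)%g x) = \sum_(x | ~~ (x \in A)) c x (s x).
  by apply: eq_bigr => x xA; rewrite permM (out_perm pA).
have -> : \sum_(x | x \in A) c x ((p * s)%g x) = \sum_(x in A) c x (s (p x)).
  by apply: eq_bigr => x _; rewrite permM.
lia.
Qed.

Lemma nred_tperm (s : {perm T}) a b : a != b ->
  nred c (tperm a b * s) + (c a (s a) + c b (s b)) = nred c s + (c a (s b) + c b (s a)).
Proof.
move=> ab; have aNb : a \notin [set b] by rewrite inE.
by have := nred_perm_on s (tperm_on a b); rewrite !big_setU1 //= !big_set1 tpermL tpermR.
Qed.

Lemma nred_cycle3 (s : {perm T}) a b d : a != b -> a != d -> b != d ->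
  nred c (tperm a b * tperm a d * s) + (c a (s a) + c b (s b) + c d (s d)) =
  nred c s + (c a (s b) + c b (s d) + c d (s a)).
Proof.
move=> ab ad bd; set A := [set a; b; d].
have pA : perm_on A (tperm a b * tperm a d)%g.
  apply: perm_onM; apply: subset_trans (tperm_on _ _) _;
    by apply/subsetP => x; rewrite !inE => /orP[] ->; rewrite ?orbT.
have aNA : a \notin [set b; d] by rewrite !inE negb_or ab ad.
have bNd : b \notin [set d] by rewrite inE.
have := nred_perm_on s pA; rewrite /A -setUA !big_setU1 //= !big_set1 !permM.
rewrite tpermL (tpermD ab) 1?eq_sym // tpermR tpermL (tpermD ad bd) tpermR.
by rewrite !addnA.
Qed.

End RedEdges.

Section Balanced.
Variables (n : nat) (c : 'I_(2 * n) -> 'I_(2 * n) -> bool).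
Hypothesis bal : balanced c.

Lemma card_red_row i : #|[set j | c i j]| = n. Proof. by case: bal => /(_ i)[]. Qed.
Lemma card_blue_row i : #|[set j | ~~ c i j]| = n. Proof. by case: bal => /(_ i)[]. Qed.
Lemma card_red_col j : #|[set i | c i j]| = n. Proof. by case: bal => _ /(_ j)[]. Qed.
Lemma card_blue_col j : #|[set i | ~~ c i j]| = n. Proof. by case: bal => _ /(_ j)[]. Qed.

Lemma balancedN : balanced (fun i j => ~~ c i j).
Proof.
have negbK_set (P : pred 'I_(2 * n)) : [set x | ~~ ~~ P x] = [set x | P x].
  by apply/setP => x; rewrite !inE negbK.
split=> x; rewrite negbK_set.
- by rewrite card_blue_row card_red_row.
- by rewrite card_blue_col card_red_col.
Qed.

Lemma nred_descent s : 0 < nred c s -> exists t, nred c t < nred c s <= (nred c t).+2.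
Proof.
move=> /card_gt0P[q]; rewrite inE => red_q.
set S := [set r | ~~ c q (s r)]; set U := [set r | ~~ c r (s q)].
have cardS : #|S| = n by rewrite (card_set_perm (fun j => ~~ c q j)) card_blue_row.
have cardU : #|U| = n by rewrite card_blue_col.
have SU_q : S :|: U \subset [set~ q].
  by apply/subsetP => r; rewrite !inE; apply: contraL => /eqP ->; rewrite red_q.
have [r] : exists r, r \in S :&: U.
  apply/card_gt0P; have := subset_leq_card SU_q; have := cardsUI S U.
  by rewrite cardsC1 card_ord cardS cardU; have := ltn_ord q; lia.
rewrite !inE => /andP[blue_qr blue_rq].
have qr : q != r by apply: contraNneq blue_qr => <-.
exists (tperm q r * s)%g; have := nred_tperm c s qr.
by rewrite red_q (negbTE blue_qr) (negbTE blue_rq); case: (c r (s r)) => /=; lia.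
Qed.

Lemma exists_nred0 : exists s, nred c s = 0.
Proof.
have [s _ s_min] := @arg_minnP _ 1%g predT (nred c) isT.
exists s; case: (posnP (nred c s)) => // /nred_descent[t /andP[lt_ts _]].
by have := s_min t isT; lia.
Qed.

End Balanced.

Lemma nred_ivt n c (bal : @balanced n c) m : m <= 2 * n ->
  exists s, m <= nred c s <= m.+1.
Proof.
elim: m => [|m IHm] le_m; first by have [s s0] := exists_nred0 bal; exists s; rewrite s0.
have [s /andP[le_ms le_sm1]] := IHm (ltnW le_m).
case: (ltnP m (nred c s)) => [lt_ms|le_sm]; first by exists s; lia.
have : 0 < nred (fun i j => ~~ c i j) s by rewrite nredN card_ord; lia.
move=> /(nred_descent (balancedN bal))[t]; rewrite !nredN card_ord.
have := nred_le c t; rewrite card_ord => le_t lt_ts.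
by exists t; lia.
Qed.

Section MissingRedCount.
Variables (n k : nat) (c : 'I_(2 * n) -> 'I_(2 * n) -> bool) (s : {perm 'I_(2 * n)}).
Hypotheses (bal : balanced c) (k_gt0 : 0 < k) (k_le_n : k <= n).
Hypotheses (nred_s : nred c s = k.-1) (nred_neq_k : forall t, nred c t != k).
(* Right vertices are renamed along s, so that s becomes the diagonal. *)
Local Notation N x y := (c x (s y)).

Lemma no_gain2 a b : a != b -> N a b + N b a != N a a + N b b + 1.
Proof.
move=> ab; have := nred_neq_k (tperm a b * s)%g.
have := nred_tperm c s ab; rewrite nred_s.
by case: (N a a) (N b b) (N a b) (N b a) => [] [] [] []; lia.
Qed.

Lemma no_gain3 a b d : a != b -> a != d -> b != d ->
  N a b + N b d + N d a != N a a + N b b + N d d + 1.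
Proof.
move=> ab ad bd; have := nred_neq_k (tperm a b * tperm a d * s)%g.
have := nred_cycle3 c s ab ad bd; rewrite nred_s.
by case: (N a a) (N b b) (N d d) (N a b) (N b d) (N d a) => [] [] [] [] [] []; lia.
Qed.

Lemma diag_neq a b : N a a -> ~~ N b b -> a != b.
Proof. by move=> Na; apply: contraNneq => <-. Qed.

Lemma blue_diag_sym r t : ~~ N r r -> ~~ N t t -> N r t = N t r.
Proof.
move=> Br Bt; case: (eqVneq r t) => [-> // | rt].
by have := no_gain2 rt; rewrite (negbTE Br) (negbTE Bt); case: (N r t); case: (N t r).
Qed.

Lemma blue_diag_trans r t u :
  ~~ N r r -> ~~ N t t -> ~~ N u u -> ~~ N r t -> ~~ N t u -> ~~ N r u.
Proof.
move=> Br Bt Bu Brt Btu.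
case: (eqVneq r t) => [-> // | rt]; case: (eqVneq t u) => [<- // | tu].
case: (eqVneq r u) => [-> // | ru].
have := no_gain3 rt ru tu; rewrite (negbTE Br) (negbTE Bt) (negbTE Bu).
by rewrite (negbTE Brt) (negbTE Btu) -(blue_diag_sym Br Bu); case: (N r u).
Qed.

Lemma blue_diag_red_blue r t u :
  ~~ N r r -> ~~ N t t -> ~~ N u u -> N r t -> ~~ N t u -> N r u.
Proof.
move=> Br Bt Bu Nrt Btu; apply: contraTT Nrt => Bru.
by rewrite (blue_diag_trans Br Bu Bt Bru) // (blue_diag_sym Bu Bt).
Qed.

Lemma blue_diag_blue_red r t u :
  ~~ N r r -> ~~ N t t -> ~~ N u u -> ~~ N r t -> N t u -> N r u.
Proof.
move=> Br Bt Bu Brt Ntu; rewrite (blue_diag_sym Br Bu).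
apply: (blue_diag_red_blue Bu Bt Br).
  by rewrite (blue_diag_sym Bu Bt).
by rewrite (blue_diag_sym Bt Br).
Qed.

Lemma red_diag_cross q r t :
  N q q -> ~~ N r r -> ~~ N t t -> N r t -> N q r = N t q.
Proof.
move=> Rq Br Bt Nrt; have rt : r != t by apply: contraTneq Nrt => ->.
have := no_gain3 (diag_neq Rq Br) (diag_neq Rq Bt) rt.
by rewrite Rq (negbTE Br) (negbTE Bt) Nrt; case: (N q r); case: (N t q).
Qed.

Lemma red_diag_same q r t :
  N q q -> ~~ N r r -> ~~ N t t -> ~~ N r t -> ~~ (N q r && N t q).
Proof.
move=> Rq Br Bt Brt; have qr := diag_neq Rq Br.
case: (eqVneq r t) => [<- | rt].
  by have := no_gain2 qr; rewrite Rq (negbTE Br); case: (N q r); case: (N r q).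
have := no_gain3 qr (diag_neq Rq Bt) rt.
by rewrite Rq (negbTE Br) (negbTE Bt) (negbTE Brt); case: (N q r); case: (N t q).
Qed.

Lemma red_diag_pair p q r :
  N p p -> N q q -> p != q -> ~~ N r r -> ~~ [&& N r p, N p q & N q r].
Proof.
move=> Rp Rq pq Br.
have rp : r != p by rewrite eq_sym (diag_neq Rp Br).
have := no_gain3 rp _ pq; rewrite eq_sym (diag_neq Rq Br) => /(_ isT).
by rewrite Rp Rq (negbTE Br); case: (N r p); case: (N p q); case: (N q r).
Qed.

Lemma exists_blue_diag_in_col q : exists2 t, ~~ N t t & N t q.
Proof.
have : ~~ ([set x | N x q] \subset [set x | N x x]).
  apply: contraL k_le_n => /subset_leq_card.
  by rewrite (card_red_col bal) -/(nred c s) nred_s; lia.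
by case/subsetPn => t; rewrite !inE => Ntq Bt; exists t.
Qed.

Lemma red_diag_meets q a b :
  N q q -> ~~ N a a -> ~~ N b b -> N a b -> N a q || N b q.
Proof.
move=> Rq Ba Bb Nab; have [t Bt Ntq] := exists_blue_diag_in_col q.
have Nba : N b a by rewrite (blue_diag_sym Bb Ba).
case: (boolP (N a t)) => [Nat | Bat].
  by rewrite -(red_diag_cross Rq Ba Bb Nab) (red_diag_cross Rq Ba Bt Nat) Ntq orbT.
have Nbt := blue_diag_red_blue Bb Ba Bt Nba Bat.
by rewrite -(red_diag_cross Rq Bb Ba Nba) (red_diag_cross Rq Bb Bt Nbt) Ntq.
Qed.

Lemma exists_blue_diag_red : exists i j, [&& ~~ N i i, ~~ N j j & N i j].
Proof.
have card_blue_diag : #|[set x | ~~ N x x]| = 2 * n - k.-1.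
  by rewrite card_setC_pred card_ord -/(nred c s) nred_s.
have /card_gt0P[r] : 0 < #|[set x | ~~ N x x]| by rewrite card_blue_diag; lia.
rewrite inE => Br; have : ~~ ([set x | ~~ N x x] \subset [set x | ~~ N r x]).
  apply: contraL k_le_n => /subset_leq_card.
  by rewrite card_blue_diag (card_set_perm (fun j => ~~ c r j)) (card_blue_row bal); lia.
by case/subsetPn => t; rewrite !inE negbK => Bt Nrt; exists r, t; rewrite Br Bt Nrt.
Qed.

Section TwoBlueClasses.
Variables i j : 'I_(2 * n).
Hypotheses (Bi : ~~ N i i) (Bj : ~~ N j j) (Nij : N i j).

Let Nji : N j i. Proof. by rewrite (blue_diag_sym Bj Bi). Qed.

Lemma entry_red_red r t : N r r -> N t t -> N r t -> N r i (+) N i t.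
Proof.
move=> Rr Rt Nrt; have e_r := red_diag_cross Rr Bi Bj Nij.
case Nri: (N r i); case Nit: (N i t) => //=.
- case: (eqVneq r t) => [rt | rt].
    by have := red_diag_same Rr Bi Bi Bi; rewrite Nri rt Nit.
  have := red_diag_pair Rr Rt rt Bj.
  by rewrite -e_r Nri Nrt (red_diag_cross Rt Bj Bi Nji) Nit.
- have Nir : N i r by have := red_diag_meets Rr Bi Bj Nij; rewrite -e_r Nri orbF.
  have Njt : N j t by have := red_diag_meets Rt Bj Bi Nji; rewrite Nit orbF.
  have Nti : N t i by rewrite (red_diag_cross Rt Bi Bj Nij).
  case: (eqVneq r t) => [rt | rt]; first by move: Nri; rewrite rt Nti.
  by have := red_diag_pair Rr Rt rt Bi; rewrite Nir Nrt Nti.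
Qed.

Lemma entry_red_blue r t : N r r -> ~~ N t t -> N r t -> N r i (+) N i t.
Proof.
move=> Rr Bt Nrt; case Nri: (N r i); case Nit: (N i t) => //=.
- have Nti : N t i by rewrite (blue_diag_sym Bt Bi).
  have := red_diag_same Rr Bi Bi Bi.
  by rewrite Nri -(red_diag_cross Rr Bt Bi Nti) Nrt.
- have Bti : ~~ N t i by rewrite (blue_diag_sym Bt Bi) Nit.
  have Ntj := blue_diag_blue_red Bt Bi Bj Bti Nij.
  by move: Nrt; rewrite (red_diag_cross Rr Bt Bj Ntj) -(red_diag_cross Rr Bi Bj Nij) Nri.
Qed.

Lemma entry_blue_red r t : ~~ N r r -> N t t -> N r i (+) N i t -> N r t.
Proof.
move=> Br Rt; case Nri: (N r i); case Nit: (N i t) => //= _.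
- by have := red_diag_meets Rt Br Bi Nri; rewrite Nit orbF.
- have Njr : N j r.
    by rewrite (blue_diag_sym Bj Br); apply: blue_diag_blue_red Br Bi Bj _ Nij; rewrite Nri.
  by rewrite -(red_diag_cross Rt Bj Br Njr) (red_diag_cross Rt Bj Bi Nji).
Qed.

Lemma entry_blue_blue r t : ~~ N r r -> ~~ N t t -> N r i (+) N i t -> N r t.
Proof.
move=> Br Bt; case Nri: (N r i); case Nit: (N i t) => //= _.
- by apply: blue_diag_red_blue Br Bi Bt Nri _; rewrite Nit.
- by apply: blue_diag_blue_red Br Bi Bt _ Nit; rewrite Nri.
Qed.

Lemma entry_addb r t : N r t = N r i (+) N i t.
Proof.
(* Both sides have n red entries in row r, so one inclusion suffices. *)
have card_row : #|[set t | N r t]| = n.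
  by rewrite (card_set_perm (c r)) (card_red_row bal).
have card_addb : #|[set t | N r i (+) N i t]| = n.
  case: (N r i) => /=.
    by rewrite (card_set_perm (fun x => ~~ c i x)) (card_blue_row bal).
  by rewrite (card_set_perm (c i)) (card_red_row bal).
case: (boolP (N r r)) => [Rr | Br].
- have sub : [set t | N r t] \subset [set t | N r i (+) N i t].
    apply/subsetP => u; rewrite !inE.
    by case: (boolP (N u u)) => [Ru | Bu]; [apply: entry_red_red | apply: entry_red_blue].
  by have /(subset_cardP (etrans card_row (esym card_addb)))/(_ t) := sub; rewrite !inE.
- have sub : [set t | N r i (+) N i t] \subset [set t | N r t].
    apply/subsetP => u; rewrite !inE.
    by case: (boolP (N u u)) => [Ru | Bu]; [apply: entry_blue_red | apply: entry_blue_blue].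
  by have /(subset_cardP (etrans card_addb (esym card_row)))/(_ t) := sub; rewrite !inE.
Qed.

End TwoBlueClasses.

Lemma missing_red_count_cut_coloring : cut_coloring c.
Proof.
have [i [j /and3P[Bi Bj Nij]]] := exists_blue_diag_red.
exists (fun r => N r i), (c i) => r x.
by have := entry_addb Bi Bj Nij r (s^-1 x)%g; rewrite permKV.
Qed.

End MissingRedCount.

Lemma cut_coloringN (T : finType) (c : T -> T -> bool) :
  cut_coloring (fun x y => ~~ c x y) <-> cut_coloring c.
Proof.
split=> -[u [v cuv]]; exists (fun x => ~~ u x), v => x y; rewrite addNb.
- by rewrite -cuv negbK.
- by rewrite cuv.
Qed.

Lemma card_set_addb (T : finType) b (P : pred T) m :
  #|T| = 2 * m -> #|[set x | b (+) P x]| = m -> #|[set x | P x]| = m.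
Proof.
move=> card_T; have := max_card [set x | P x].
by case: b => /=; rewrite ?card_setC_pred card_T; lia.
Qed.

Section CutColoring.
Variables (n : nat) (c : 'I_(2 * n) -> 'I_(2 * n) -> bool).
Hypothesis bal : balanced c.

Lemma blue_adj_sym : symmetric (blue_adj c).
Proof. by case=> x [] y. Qed.

Lemma cut_coloring_cards u v : 0 < n -> (forall i j, c i j = u i (+) v j) ->
  #|[set i | u i]| = n /\ #|[set j | v j]| = n.
Proof.
move=> n_gt0 cuv; have o_lt : 0 < 2 * n by lia.
pose o := Ordinal o_lt; split.
- apply: (@card_set_addb _ (v o) _ n (card_ord (2 * n))); apply: etrans (card_red_col bal o).
  by apply: eq_card => i; rewrite !inE cuv addbC.
- apply: (@card_set_addb _ (u o) _ n (card_ord (2 * n))); apply: etrans (card_red_row bal o).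
  by apply: eq_card => j; rewrite !inE cuv.
Qed.

Lemma cut_coloring_nred_even s : 0 < n -> cut_coloring c -> ~~ odd (nred c s).
Proof.
move=> n_gt0 [u [v cuv]]; have [card_u card_v] := cut_coloring_cards n_gt0 cuv.
have card_vs : #|[set i | v (s i)]| = n by rewrite card_set_perm.
have : nred c s + 2 * #|[set i | u i && v (s i)]| = #|[set i | u i]| + #|[set i | v (s i)]|.
  rewrite nred_sum !card_set_sum big_distrr -!big_split /=.
  by apply: eq_bigr => i _; rewrite cuv; case: (u i); case: (v (s i)).
rewrite card_u card_vs => count_eq.
have -> : nred c s = 2 * (n - #|[set i | u i && v (s i)]|) by lia.
by rewrite oddM.
Qed.

Lemma cut_coloring_disconnected : 0 < n -> cut_coloring c -> ~ blue_connected c.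
Proof.
move=> n_gt0 [u [v cuv]] conn; have [card_u _] := cut_coloring_cards n_gt0 cuv.
have /card_gt0P[i1] : 0 < #|[set i | u i]| by rewrite card_u.
have /card_gt0P[i0] : 0 < #|[set i | ~~ u i]| by rewrite card_setC_pred card_ord card_u; lia.
rewrite !inE => Nu0 u1.
pose side : pred (vtx n) := fun z => match z with inl i => u i | inr j => v j end.
have closed_side : closed (blue_adj c) side.
  by case=> x [] y //=; rewrite !unfold_in /= cuv; case: (u _); case: (v _).
have := closed_connect closed_side (conn (inl i0) (inl i1)).
by rewrite !unfold_in /= u1 (negbTE Nu0).
Qed.

Lemma blue_closed_cut_coloring (u v : 'I_(2 * n) -> bool) i0 i1 :
  (forall i j, ~~ c i j -> u i = v j) -> ~~ u i0 -> u i1 ->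
  forall i j, c i j = u i (+) v j.
Proof.
move=> closed_uv Nu0 u1.
have cut_red i : [set j | u i (+) v j] \subset [set j | c i j].
  apply/subsetP => j; rewrite !inE; apply: contraLR => /closed_uv ->.
  by rewrite addbb.
have := subset_leq_card (cut_red i1); have := subset_leq_card (cut_red i0).
rewrite u1 (negbTE Nu0) /= !(card_red_row bal) card_setC_pred card_ord => le_v le_Nv.
set V := #|[set j | v j]| in le_v le_Nv.
have card_cut i : #|[set j | u i (+) v j]| = n.
  by case: (u i) => /=; rewrite ?card_setC_pred ?card_ord -/V; lia.
move=> i j; have /subset_cardP := etrans (card_cut i) (esym (card_red_row bal i)).
by move=> /(_ (cut_red i))/(_ j); rewrite !inE.
Qed.

Lemma exists_connect_left (z : vtx n) : exists i, connect (blue_adj c) z (inl i).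
Proof.
case: z => [i | j]; first by exists i.
have /card_gt0P[i] : 0 < #|[set i | ~~ c i j]|.
  by rewrite (card_blue_col bal); have := ltn_ord j; lia.
by rewrite inE => blue_ij; exists i; apply: connect1.
Qed.

Lemma disconnected_cut_coloring x y : ~~ connect (blue_adj c) x y -> cut_coloring c.
Proof.
move=> Nxy; have sym := sym_connect_sym blue_adj_sym.
pose u i := connect (blue_adj c) x (inl i); pose v j := connect (blue_adj c) x (inr j).
have [i1 x_i1] := exists_connect_left x; have [i0 y_i0] := exists_connect_left y.
have Nu0 : ~~ u i0.
  by apply: contra Nxy => x_i0; apply: connect_trans x_i0 _; rewrite sym.
exists u, v; apply: (blue_closed_cut_coloring _ Nu0 x_i1) => i j blue_ij.
have edge_ij : blue_adj c (inl i) (inr j) by [].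
exact: same_connect_r sym _ _ (connect1 edge_ij) x.
Qed.

End CutColoring.

Lemma exists_nred_le_half n c k (bal : @balanced n c) :
  0 < k -> k <= n -> ~ cut_coloring c -> exists s, nred c s = k.
Proof.
move=> k_gt0 le_kn Ncut; have le_k1 : k.-1 <= 2 * n by lia.
have [s /andP[lo hi]] := nred_ivt bal le_k1.
have [/existsP[t /eqP nred_t] | /existsPn Nk] := boolP [exists t, nred c t == k].
  by exists t.
case: Ncut; apply: (@missing_red_count_cut_coloring n k c s bal k_gt0 le_kn _ Nk).
by have := Nk s; lia.
Qed.

Lemma exists_nred n c k (bal : @balanced n c) :
  ~ cut_coloring c -> 0 < k < 2 * n -> exists s, nred c s = k.
Proof.
move=> Ncut /andP[k_gt0 lt_k]; have [le_kn | lt_nk] := leqP k n.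
  exact: exists_nred_le_half.
have NcutN : ~ cut_coloring (fun i j => ~~ c i j) by rewrite cut_coloringN.
have blue_k_gt0 : 0 < 2 * n - k by lia.
have le_blue_k : 2 * n - k <= n by lia.
have [s] := exists_nred_le_half (balancedN bal) blue_k_gt0 le_blue_k NcutN.
rewrite nredN card_ord => blue_k; exists s.
by have := nred_le c s; rewrite card_ord; lia.
Qed.

Theorem corollary1 (n k : nat) (red : 'I_(2 * n) -> 'I_(2 * n) -> bool) :
  odd k -> k <= 2 * n -> balanced red ->
  ((exists s : 'S_(2 * n), matching_with_k_red k red s) <-> blue_connected red).
Proof.
move=> odd_k le_k bal; have k_gt0 : 0 < k by case: k odd_k {le_k}.
have n_gt0 : 0 < n by lia.
split=> [[s [red_k _]] x y | conn].
  apply/negPn/negP => /(disconnected_cut_coloring bal) cut.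
  by have := cut_coloring_nred_even bal s n_gt0 cut; rewrite /nred red_k odd_k.
have k_range : 0 < k < 2 * n.
  by rewrite k_gt0 ltn_neqAle le_k andbT; apply: contraTneq odd_k => ->; rewrite oddM.
have Ncut : ~ cut_coloring red by move/(cut_coloring_disconnected bal n_gt0).
have [s red_k] := exists_nred bal Ncut k_range.
exists s; split=> //.
by rewrite -/(nred (fun i j => ~~ red i j) s) nredN card_ord red_k.
Qed.
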